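(* Let $x$ be a variable over a finite abelian group $H$. Then there is a variable gadget for $x$ with at most $4|H|\log_2^2|H|$ auxiliary vertices, at most $7|H|\log_2^2|H|$ edges, and maximum clique size at most $\min\{4,|H|\}$.
   Context: For a variable $x$ over $H$, let $V_x=\{x\mapsto a: a\in H\}$ be a set of $|H|$ vertices. A variable gadget for $x$ is a graph $G=(V_x\cup V_A,E)$ (the vertices of $V_A$ are called auxiliary) such that: (Completeness) for each $a\in H$, $G$ has an automorphism $f_a$ with $f_a(x\mapsto b)=x\mapsto(a+b)$ for all $b\in H$; (Soundness) for every automorphism $f$ of $G$ there exists $a\in H$ with $f(x\mapsto b)=x\mapsto(a+b)$ for all $b\in H$. *)

From Stdlib Require Import Reals.
From mathcomp Require Import all_boot all_fingroup all_algebra.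
Set Implicit Arguments. Unset Strict Implicit. Unset Printing Implicit Defensive.

(* Vertex type of a gadget for a variable x over H with n auxiliary vertices:
   inl a is the vertex (x |-> a), inr i is the i-th auxiliary vertex. *)
Definition gvert (H : finType) (n : nat) : finType := (H + 'I_n)%type.

Section Graphs.
Variable V : finType.

Definition simple_graph (e : rel V) : Prop :=
  (forall u v, e u v = e v u) /\ (forall u, e u u = false).

Definition edge_set (e : rel V) : {set {set V}} :=
  [set E : {set V} | [exists u, exists v, [&& u != v, e u v & E == [set u; v]]]].

Definition is_clique (e : rel V) (A : {set V}) : Prop :=
  forall u v, u \in A -> v \in A -> u != v -> e u v.

Definition is_automorphism (e : rel V) (f : {perm V}) : Prop :=
  forall u v, e (f u) (f v) = e u v.
End Graphs.

Definition variable_gadget (H : finZmodType) (n : nat) (e : rel (gvert H n)) : Prop :=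
  simple_graph e /\
  (forall a : H, exists f : {perm gvert H n}, is_automorphism e f /\
      forall b : H, f (inl b) = inl (GRing.add a b)) /\
  (forall f : {perm gvert H n}, is_automorphism e f ->
      exists a : H, forall b : H, f (inl b) = inl (GRing.add a b)).

Definition log2 (x : R) : R := Rdiv (ln x) (ln 2).

Definition size_bound (c : R) (h : nat) : R :=
  Rmult (Rmult c (INR h)) (Rmult (log2 (INR h)) (log2 (INR h))).

From HB Require Import structures.
From Stdlib Require Import Reals Lra.
From mathcomp Require Import all_boot all_fingroup all_algebra zify.
Set Implicit Arguments. Unset Strict Implicit. Unset Printing Implicit Defensive.
Import GRing.Theory.

(* Choose generators g_0, ..., g_(k-1) of H with 2^k <= |H|: each new generator at least
   doubles the subgroup generated so far.  For every c in H and i < k, attach to the vertex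
   x|->c a hub carrying i+1 pendant leaves, and join the hub by a path hub - mid - bridge to
   a bridge that is also adjacent to x|->c and x|->c+g_i.  Translating every label by a is
   an automorphism mapping x|->b to x|->a+b.  Conversely, an automorphism preserves degrees
   and numbers of leaf neighbours; these single out the vertices x|->c (degree > 2, no leaf
   and no degree-2 neighbour), the hub of index i next to x|->c (its i+1 leaves), then its
   mid and its bridge.  So if x|->b is sent to x|->c, then x|->b+g_i is sent to x|->c+g_i,
   and the shifts preserved by the automorphism form a subgroup containing all g_i, i.e.
   all of H.  The graph is bipartite, so its cliques have at most two vertices; it has
   |H|k(k+3) auxiliary vertices and at most |H|k(k+5) edges. *)

Section SmallGeneratingSet.
Variables (gT : finGroupType) (G : {group gT}).
Local Open Scope group_scope.

Lemma extend_generating_seq (s : seq gT) :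
    {subset s <= G} -> 1 \notin s -> 2 ^ size s <= #|<<[set x in s]>>| ->
  exists s' : seq gT, [/\ <<[set x in s']>> = G, 1 \notin s' & 2 ^ size s' <= #|G|].
Proof.
have [m] := ubnP #|G :\: <<[set x in s]>>|.
elim: m s => // m IHm s ltGs sG s1 size_s.
have sGs : <<[set x in s]>> \subset G.
  by rewrite gen_subG; apply/subsetP=> x; rewrite inE => /sG.
have [eqGs | neGs] := eqVneq <<[set x in s]>> G; first by exists s; rewrite -eqGs.
have [x Gx notsx] : exists2 x, x \in G & x \notin <<[set x in s]>>.
  by apply/subsetPn; apply: contra neGs => sGs'; rewrite eqEsubset sGs.
have ltss : <<[set x in s]>> \proper <<[set y in x :: s]>>.
  apply/properP; split; first by apply: genS; apply/subsetP=> y; rewrite !inE => ->; rewrite orbT.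
  by exists x => //; apply: mem_gen; rewrite !inE eqxx.
apply: IHm (x :: s) _ _ _ _.
- rewrite -ltnS; apply: leq_trans ltGs; rewrite ltnS; apply: proper_card.
  apply/properP; split; first by apply: setDS; apply: proper_sub.
  by exists x; rewrite !inE ?Gx ?andbT // (mem_gen (x := x)) ?inE ?eqxx.
- by move=> y; rewrite inE => /predU1P[-> | /sG].
- by rewrite inE negb_or s1 andbT; apply: contraNneq notsx => <-; apply: group1.
- (* Lagrange: the old subgroup has index q >= 2 in the new one. *)
  rewrite /= expnS.
  have /dvdnP[q defq] := cardSg (proper_sub ltss).
  have := proper_card ltss; rewrite defq.
  case: q defq => [|[|q]] defq; rewrite ?mul0n ?mul1n ?ltnn //= => _.
  by rewrite leq_mul.
Qed.

Lemma exists_small_generating_family : exists k (g : 'I_k -> gT),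
  [/\ <<[set g i | i : 'I_k]>> = G, forall i, g i != 1 & 2 ^ k <= #|G|].
Proof.
have [||| s [gen_s s1 exp_s]] := @extend_generating_seq [::]; rewrite ?cardG_gt0 //.
exists (size s), (tnth (in_tuple s)); split=> // [|i].
  rewrite -gen_s; congr <<_>>; apply/setP => x; rewrite inE.
  by apply/imsetP/idP => [[i _ ->] | /(tnthP (in_tuple s))[i ->]]; [apply: mem_tnth | exists i].
by apply: contraNneq s1 => <-; apply: mem_tnth.
Qed.
End SmallGeneratingSet.

Section GraphInvariants.
Variables (V : finType) (e : rel V).

Definition nbrs (u : V) : {set V} := [set v | e u v].

Lemma in_nbrs u v : (v \in nbrs u) = e u v.
Proof. by rewrite inE. Qed.

Definition nbr_count (p : pred V) (u : V) : nat := #|[set v in nbrs u | p v]|.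
Definition deg (u : V) : nat := #|nbrs u|.

Lemma nbr_count_eq0 (p : pred V) u : (forall v, e u v -> ~~ p v) -> nbr_count p u = 0.
Proof.
move=> nbr_p; apply/eqP; rewrite cards_eq0; apply/eqP/setP => v.
by rewrite !inE; case: (boolP (e u v)) => // /nbr_p /negbTE.
Qed.

Lemma nbr_count_gt0 (p : pred V) u v : e u v -> p v -> 0 < nbr_count p u.
Proof. by move=> euv pv; apply/card_gt0P; exists v; rewrite !inE euv. Qed.

Definition is_leaf (u : V) : bool := deg u == 1.
Definition leaf_count : V -> nat := nbr_count is_leaf.
Definition deg2_count : V -> nat := nbr_count (fun v => deg v == 2).
Definition has_var_signature (u : V) : bool :=
  [&& 2 < deg u, leaf_count u == 0 & deg2_count u == 0].

Variable f : {perm V}.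
Hypothesis f_aut : is_automorphism e f.

Lemma nbr_count_aut (p : pred V) :
  (forall v, p (f v) = p v) -> forall u, nbr_count p (f u) = nbr_count p u.
Proof.
move=> fp u; rewrite /nbr_count -[RHS](card_imset _ (@perm_inj _ f)).
apply: eq_card => v.
by rewrite !inE -[v](permKV f) (mem_imset _ _ (@perm_inj _ f)) !inE f_aut fp.
Qed.

Lemma deg_aut u : deg (f u) = deg u.
Proof.
have deg_count v : deg v = nbr_count predT v by apply: eq_card => w; rewrite !inE andbT.
by rewrite !deg_count; apply: nbr_count_aut.
Qed.

Lemma is_leaf_aut u : is_leaf (f u) = is_leaf u.
Proof. by rewrite /is_leaf deg_aut. Qed.

Lemma leaf_count_aut u : leaf_count (f u) = leaf_count u.
Proof. exact/nbr_count_aut/is_leaf_aut. Qed.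

Lemma has_var_signature_aut u : has_var_signature (f u) = has_var_signature u.
Proof.
rewrite /has_var_signature deg_aut leaf_count_aut /deg2_count nbr_count_aut //.
by move=> v; rewrite deg_aut.
Qed.
End GraphInvariants.

Lemma bipartite_clique_card (V : finType) (e : rel V) (colour : V -> bool) :
  (forall u v, e u v -> colour u != colour v) ->
  forall A : {set V}, is_clique e A -> #|A| <= 2.
Proof.
move=> colour_e A clA; rewrite -[2]card_bool; apply: (@leq_card_in _ _ colour).
by move=> u v uA vA /eqP; apply: contraTeq => /(clA u v uA vA)/colour_e.
Qed.

Lemma card_edge_set_le (V I : finType) (e : rel V) (ends : I -> V * V) :
  (forall u v, e u v -> exists t, ends t = (u, v) \/ ends t = (v, u)) ->
  #|edge_set e| <= #|I|.
Proof.
move=> cover; pose pair t := [set (ends t).1; (ends t).2].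
apply: leq_trans (leq_imset_card pair predT); apply: subset_leq_card.
apply/subsetP => E; rewrite inE => /existsP[u /existsP[v /and3P[_ euv /eqP ->]]].
have [t ends_t] := cover u v euv; apply/imsetP; exists t => //.
by rewrite /pair; case: ends_t => -> //=; rewrite setUC.
Qed.

Section TransportPerm.
Variables (A B : finType) (phi : A -> B) (psi : B -> A).
Hypotheses (phiK : cancel phi psi) (psiK : cancel psi phi).

Definition transport_perm (f : {perm A}) : {perm B} :=
  perm (inj_comp (can_inj phiK) (inj_comp (@perm_inj _ f) (can_inj psiK))).

Lemma transport_permE f x : transport_perm f x = phi (f (psi x)).
Proof. by rewrite permE. Qed.
End TransportPerm.

Section Relabel.
Variables (H : finZmodType) (T : finType).
Local Notation gV := (gvert H #|{: T}|).

Definition to_gvert (u : H + T) : gV :=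
  match u with inl b => inl b | inr t => inr (enum_rank t) end.
Definition of_gvert (u : gV) : H + T :=
  match u with inl b => inl b | inr j => inr (enum_val j) end.

Lemma to_gvertK : cancel to_gvert of_gvert.
Proof. by case=> //= t; rewrite enum_rankK. Qed.
Lemma of_gvertK : cancel of_gvert to_gvert.
Proof. by case=> //= j; rewrite enum_valK. Qed.

Definition relabel (e : rel (H + T)) : rel gV := fun u v => e (of_gvert u) (of_gvert v).

Variable e : rel (H + T).

Lemma relabel_variable_gadget :
    simple_graph e ->
    (forall a : H, exists f : {perm H + T}, is_automorphism e f /\
       forall b, f (inl b) = inl (a + b)%R) ->
    (forall f : {perm H + T}, is_automorphism e f ->
       exists a : H, forall b, f (inl b) = inl (a + b)%R) ->
  variable_gadget (relabel e).
Proof.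
move=> [e_sym e_irr] complete sound; split; [|split].
- by split=> [u v | u]; [exact: e_sym | exact: e_irr].
- move=> a; have [f [f_aut f_inl]] := complete a.
  exists (transport_perm to_gvertK of_gvertK f); split=> [u v | b].
    by rewrite /relabel !transport_permE !to_gvertK f_aut.
  by rewrite transport_permE /= f_inl.
- move=> f f_aut.
  have [|a f_inl] := sound (transport_perm of_gvertK to_gvertK f).
    move=> u v; have := f_aut (to_gvert u) (to_gvert v).
    by rewrite /relabel !to_gvertK !transport_permE.
  exists a => b; have := f_inl b; rewrite transport_permE /=.
  by move=> /(congr1 to_gvert); rewrite of_gvertK.
Qed.

Lemma card_edge_set_relabel_le (I : finType) (ends : I -> (H + T) * (H + T)) :
    (forall u v, e u v -> exists t, ends t = (u, v) \/ ends t = (v, u)) ->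
  #|edge_set (relabel e)| <= #|I|.
Proof.
move=> cover; pose ends' t := (to_gvert (ends t).1, to_gvert (ends t).2).
apply: (@card_edge_set_le _ _ _ ends') => u v /cover[t ends_t]; exists t.
by rewrite /ends'; case: ends_t => -> /=; rewrite !of_gvertK; [left | right].
Qed.
End Relabel.

Inductive role (k : nat) := Hub | Mid | Bridge | Leaf of 'I_k.
Arguments Hub {k}.
Arguments Mid {k}.
Arguments Bridge {k}.

Section RoleFinType.
Variable k : nat.

Definition role_eqb (r r' : role k) : bool :=
  match r, r' with
  | Hub, Hub | Mid, Mid | Bridge, Bridge => true
  | Leaf l, Leaf l' => l == l'
  | _, _ => false
  end.

Lemma role_eqP : Equality.axiom role_eqb.
Proof.
case=> [||| l] [||| l'] /=; try by constructor.
by apply: (iffP eqP) => [-> | []].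
Qed.

Definition option_of_role (r : role k) : option (option (option 'I_k)) :=
  match r with
  | Hub => None | Mid => Some None | Bridge => Some (Some None)
  | Leaf l => Some (Some (Some l))
  end.
Definition role_of_option (o : option (option (option 'I_k))) : role k :=
  match o with
  | None => Hub | Some None => Mid | Some (Some None) => Bridge
  | Some (Some (Some l)) => Leaf l
  end.
Lemma option_of_roleK : cancel option_of_role role_of_option.
Proof. by case. Qed.

HB.instance Definition _ := hasDecEq.Build (role k) role_eqP.

Lemma role_eqE : role_eqb = eq_op.
Proof. by []. Qed.

HB.instance Definition _ := Choice.copy (role k) (can_type option_of_roleK).
HB.instance Definition _ := CanIsCountable option_of_roleK.
HB.instance Definition _ : isFinite (role k) := CanIsFinite option_of_roleK.

Lemma card_role : #|{: role k}| = k.+3.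
Proof.
have bij_role : bijective option_of_role.
  by exists role_of_option => [|[[[]|]|]] //; apply: option_of_roleK.
by rewrite (bij_eq_card bij_role) !card_option card_ord.
Qed.
End RoleFinType.

Lemma card3_le (T : finType) (S : {set T}) (a b c : T) :
  a \in S -> b \in S -> c \in S -> uniq [:: a; b; c] -> 2 < #|S|.
Proof.
move=> aS bS cS /card_uniqP card_abc; rewrite -[3]/(size [:: a; b; c]) -card_abc.
apply: subset_leq_card.
by apply/subsetP=> x; rewrite !inE => /or3P[] /eqP->.
Qed.

Lemma card_ord_leq k (i : 'I_k) : #|[set l : 'I_k | l <= i]| = i.+1.
Proof.
have widen_inj : injective (widen_ord (ltn_ord i)) by move=> l l' /(congr1 val) /= /val_inj.
rewrite -[RHS]card_ord -cardsT -(card_imset _ widen_inj); apply: eq_card => l.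
rewrite !inE; apply/idP/imsetP => [li | [l' _ ->]]; last by rewrite /= -ltnS.
by exists (Ordinal (li : l < i.+1)) => //; apply: val_inj.
Qed.

Section Gadget.
Variables (H : finZmodType) (k : nat) (g : 'I_k -> H).
Hypothesis g_neq0 : forall i, g i != 0%R.

(* The auxiliary vertex (c, i, Leaf l) with i < l is isolated: it only pads the auxiliary
   vertices to a product type. *)
Definition gadget_aux := (H * 'I_k * role k)%type.
Local Notation gV := (H + gadget_aux)%type.

Definition arc (u v : gV) : bool :=
  match u, v with
  | inl b, inr (c, _, Hub) => b == c
  | inl b, inr (c, i, Bridge) => (b == c) || (b == c + g i)%R
  | inr (c, i, Hub), inr (c', i', Mid) => (c == c') && (i == i')
  | inr (c, i, Hub), inr (c', i', Leaf l) => [&& c == c', i == i' & (l <= i)]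
  | inr (c, i, Mid), inr (c', i', Bridge) => (c == c') && (i == i')
  | _, _ => false
  end.

Definition gadget : rel gV := fun u v => arc u v || arc v u.

Local Notation hub c i := (inr (c, i, Hub) : gV).
Local Notation mid c i := (inr (c, i, Mid) : gV).
Local Notation bridge c i := (inr (c, i, Bridge) : gV).
Local Notation leaf c i l := (inr (c, i, Leaf l) : gV).

Lemma shift_neq c i : c != (c + g i)%R.
Proof. by rewrite -[c in c != _]addr0 (inj_eq (addrI c)) eq_sym g_neq0. Qed.

Ltac gadget_simpl :=
  rewrite /gadget /= -?sum_eqE /= ?xpair_eqE -?role_eqE /= ?eqxx ?andbT ?andbF ?orbT ?orbF.

Lemma gadget_sym : symmetric gadget.
Proof. by move=> u v; rewrite /gadget orbC. Qed.

Lemma gadget_irr : irreflexive gadget.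
Proof. by case=> [b | [[c i] []]] //; gadget_simpl. Qed.

Lemma nbrs_mid c i : nbrs gadget (mid c i) = [set hub c i; bridge c i].
Proof.
apply/setP=> -[b | [[c' i'] [| | | l]]]; rewrite !inE; gadget_simpl => //.
by rewrite eq_sym [i == _]eq_sym.
Qed.

Lemma nbrs_bridge c i : nbrs gadget (bridge c i) = [set inl c; inl (c + g i)%R; mid c i].
Proof.
apply/setP=> -[b | [[c' i'] [| | | l]]]; by rewrite !inE; gadget_simpl.
Qed.

Lemma nbrs_leaf c i l : nbrs gadget (leaf c i l) = if (l <= i) then [set hub c i] else set0.
Proof.
apply/setP=> -[b | [[c' i'] [| | | l']]]; case: ifP => li; rewrite !inE; gadget_simpl => //.
all: by case: (i' =P i) => [-> | _]; rewrite ?li ?andbF ?andbT.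
Qed.

Lemma deg_mid c i : deg gadget (mid c i) = 2.
Proof. by rewrite /deg nbrs_mid cards2; gadget_simpl. Qed.

Lemma deg_leaf c i l : deg gadget (leaf c i l) = (l <= i).
Proof. by rewrite /deg nbrs_leaf; case: ifP; rewrite ?cards1 ?cards0. Qed.

Lemma deg_bridge c i : 2 < deg gadget (bridge c i).
Proof.
rewrite /deg nbrs_bridge.
apply: (card3_le (a := inl c) (b := inl (c + g i)%R) (c := mid c i)); rewrite ?inE ?eqxx ?orbT //=.
by rewrite !inE; gadget_simpl; rewrite shift_neq.
Qed.

Lemma deg_hub c i : 2 < deg gadget (hub c i).
Proof.
by apply: (card3_le (a := inl c) (b := mid c i) (c := leaf c i i));
  rewrite ?in_nbrs /= ?inE; gadget_simpl; rewrite ?leqnn.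
Qed.

Lemma deg_inl b (i : 'I_k) : 2 < deg gadget (inl b).
Proof.
apply: (card3_le (a := hub b i) (b := bridge b i) (c := bridge (b - g i)%R i));
  rewrite ?in_nbrs /= ?inE; gadget_simpl; rewrite ?subrK ?eqxx ?orbT //.
by have := shift_neq (b - g i)%R i; rewrite subrK eq_sym => ->.
Qed.

Lemma deg_nbr_inl b v : gadget (inl b) v -> 2 < deg gadget v.
Proof.
by case: v => [b' | [[c i] [| | | l]]]; gadget_simpl => // _;
  [exact: deg_hub | exact: deg_bridge].
Qed.

Section Signatures.
Variable i0 : 'I_k.

Lemma is_leaf_gadget v : is_leaf gadget v = if v is inr (_, i, Leaf l) then l <= i else false.
Proof.
rewrite /is_leaf; case: v => [b | [[c i] [| | | l]]].
- exact/gtn_eqF/ltnW/(deg_inl b i0).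
- exact/gtn_eqF/ltnW/deg_hub.
- by rewrite deg_mid.
- exact/gtn_eqF/ltnW/deg_bridge.
- by rewrite deg_leaf; case: (l <= i).
Qed.

Lemma deg_eq2_gadget v : (deg gadget v == 2) = if v is inr (_, _, Mid) then true else false.
Proof.
case: v => [b | [[c i] [| | | l]]].
- exact/gtn_eqF/(deg_inl b i0).
- exact/gtn_eqF/deg_hub.
- by rewrite deg_mid.
- exact/gtn_eqF/deg_bridge.
- by rewrite deg_leaf; case: (l <= i).
Qed.

Lemma leaf_nbr_is_hub v w : is_leaf gadget w -> gadget v w -> exists c i, v = hub c i.
Proof.
case: w => [b | [[c i] [| | | l]]]; rewrite is_leaf_gadget // => li.
by rewrite gadget_sym -in_nbrs nbrs_leaf li inE => /eqP ->; exists c, i.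
Qed.

Lemma leaf_count_gadget v : leaf_count gadget v = if v is inr (_, i, Hub) then i.+1 else 0.
Proof.
case: v => [b | [[c i] [| | | l]]]; last 4 first.
- have leaf_inj : injective (fun l => leaf c i l) by move=> l l' [].
  rewrite /leaf_count /nbr_count -(card_ord_leq i) -(card_imset _ leaf_inj).
  apply: eq_card => w; rewrite inE in_nbrs; apply/idP/imsetP => [| [l li ->]].
    case: w => [b | [[c' i'] [| | | l]]]; rewrite is_leaf_gadget ?andbF //; gadget_simpl.
    by case/andP=> /and3P[/eqP <- /eqP <- li] _; exists l; rewrite ?inE.
  by rewrite inE in li; rewrite is_leaf_gadget li; gadget_simpl; rewrite li.
all: by apply: nbr_count_eq0 => w vw; apply/negP => /leaf_nbr_is_hub /(_ vw) [c' [i' //]].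
Qed.

Lemma has_var_signature_gadget v :
  has_var_signature gadget v = if v is inl _ then true else false.
Proof.
rewrite /has_var_signature leaf_count_gadget.
case: v => [b | [[c i] [| | | l]]] /=; rewrite ?andbF ?deg_mid ?deg_leaf //.
- rewrite (deg_inl b i0) /deg2_count nbr_count_eq0 // => w /deg_nbr_inl.
  by move/gtn_eqF ->.
- have : 0 < deg2_count gadget (bridge c i).
    by apply: (nbr_count_gt0 (v := mid c i)); [gadget_simpl | rewrite deg_mid].
  by rewrite lt0n => /negbTE ->; rewrite !andbF.
- by case: (l <= i).
Qed.
End Signatures.

Section Soundness.
Variable F : {perm H + gadget_aux}.
Hypothesis F_aut : is_automorphism gadget F.

Lemma aut_inl b : exists c, F (inl b) = inl c.
Proof.
case def_v: (F (inl b)) => [c | [[c i] r]]; first by exists c.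
have := has_var_signature_aut F_aut (inl b).
by rewrite def_v !(has_var_signature_gadget i).
Qed.

Lemma aut_shift b c i : F (inl b) = inl c -> F (inl (b + g i)%R) = inl (c + g i)%R.
Proof.
move=> Fb.
have Fhub : F (hub b i) = hub c i.
  have : gadget (inl c) (F (hub b i)) by rewrite -Fb F_aut; gadget_simpl.
  have := leaf_count_aut F_aut (hub b i); rewrite !(leaf_count_gadget i).
  case: (F (hub b i)) => [d | [[c' i'] []]] // [/val_inj ->]; gadget_simpl.
  by move=> /eqP ->.
have Fmid : F (mid b i) = mid c i.
  have : gadget (hub c i) (F (mid b i)) by rewrite -Fhub F_aut; gadget_simpl.
  have := deg_aut F_aut (mid b i); rewrite deg_mid => /eqP; rewrite (deg_eq2_gadget i).
  by case: (F (mid b i)) => [d | [[c' i'] []]] // _; gadget_simpl => /andP[/eqP <- /eqP <-].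
have Fbridge : F (bridge b i) = bridge c i.
  have : F (bridge b i) \in nbrs gadget (mid c i) by rewrite in_nbrs -Fmid F_aut; gadget_simpl.
  by rewrite nbrs_mid !inE -Fhub (inj_eq perm_inj); gadget_simpl => /eqP.
have [d Fbg] := aut_inl (b + g i)%R.
have : F (inl (b + g i)%R) \in nbrs gadget (bridge c i).
  by rewrite in_nbrs -Fbridge F_aut; gadget_simpl.
rewrite nbrs_bridge !inE -Fb (inj_eq perm_inj) Fbg; gadget_simpl.
by rewrite eq_sym (negbTE (shift_neq b i)) => /eqP ->.
Qed.

Lemma gadget_sound : <<[set g i | i : 'I_k]>>%g = [set: H] ->
  exists a, forall b, F (inl b) = inl (a + b)%R.
Proof.
move=> gen_g; have [a Fa0] := aut_inl 0%R.
pose S := [set b | F (inl b) == inl (a + b)%R].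
pose K := [set x : H | [forall b, (b \in S) ==> ((b + x)%R \in S)]].
have K_group : group_set K.
  apply/group_setP; split=> [|x y]; rewrite !inE.
    by apply/forallP => b; rewrite addr0 implybb.
  move=> /forallP Kx /forallP Ky; apply/forallP => b; apply/implyP => Sb.
  by rewrite FinRing.zmodMgE addrA (implyP (Ky _)) ?(implyP (Kx _)).
have : <<[set g i | i : 'I_k]>>%g \subset Group K_group.
  rewrite gen_subG; apply/subsetP => _ /imsetP[i _ ->]; rewrite inE.
  by apply/forallP => b; apply/implyP; rewrite !inE => /eqP /aut_shift ->; rewrite addrA.
rewrite gen_g => /subsetP K_all; exists a => b.
move: (K_all b (in_setT b)); rewrite inE => /forallP /(_ 0%R).
by rewrite !inE Fa0 addr0 add0r eqxx => /eqP.
Qed.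
End Soundness.

Definition translate (a : H) (u : gV) : gV :=
  match u with
  | inl b => inl (a + b)%R
  | inr (c, i, r) => inr ((a + c)%R, i, r)
  end.

Lemma translate_inj a : injective (translate a).
Proof.
move=> [b | [[c i] r]] [b' | [[c' i'] r']] //= [].
  by move/addrI ->.
by move=> /addrI -> -> ->.
Qed.

Lemma gadget_complete a : exists f : {perm gV},
  is_automorphism gadget f /\ forall b, f (inl b) = inl (a + b)%R.
Proof.
exists (perm (@translate_inj a)); split=> [u v | b]; rewrite !permE //.
case: u => [b | [[c i] [| | | l]]]; case: v => [b' | [[c' i'] [| | | l']]];
  by gadget_simpl; rewrite -?addrA ?(inj_eq (addrI a)).
Qed.

Definition gadget_colour (u : gV) : bool :=
  if u is inr (_, _, (Hub | Bridge)) then true else false.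

Lemma gadget_colourP u v : gadget u v -> gadget_colour u != gadget_colour v.
Proof. by case: u => [b | [[c i] [| | | l]]]; case: v => [b' | [[c' i'] [| | | l']]]. Qed.

Definition edge_ends (t : H * 'I_k * option (option (role k))) : gV * gV :=
  let: (c, i, o) := t in
  match o with
  | None => (inl (c + g i)%R, bridge c i)
  | Some None => (inl c, bridge c i)
  | Some (Some Hub) => (inl c, hub c i)
  | Some (Some Mid) => (hub c i, mid c i)
  | Some (Some Bridge) => (mid c i, bridge c i)
  | Some (Some (Leaf l)) => (hub c i, leaf c i l)
  end.

Lemma arc_edge_ends u v : arc u v -> exists t, edge_ends t = (u, v).
Proof.
case: u => [b | [[c i] [| | | l]]]; case: v => [b' | [[c' i'] [| | | l']]] //=.
- by move=> /eqP ->; exists (c', i', Some (Some Hub)).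
- by case/orP => /eqP ->; [exists (c', i', Some None) | exists (c', i', None)].
- by case/andP => /eqP <- /eqP <-; exists (c, i, Some (Some Mid)).
- by case/and3P => /eqP <- /eqP <- _; exists (c, i, Some (Some (Leaf l'))).
- by case/andP => /eqP <- /eqP <-; exists (c, i, Some (Some Bridge)).
Qed.

Lemma gadget_edge_ends u v :
  gadget u v -> exists t, edge_ends t = (u, v) \/ edge_ends t = (v, u).
Proof. by case/orP => /arc_edge_ends [t ends_t]; exists t; [left | right]. Qed.

Lemma card_gadget_aux : #|{: gadget_aux}| = #|H| * k * k.+3.
Proof. by rewrite !card_prod card_ord card_role. Qed.

Lemma card_edge_index : #|{: H * 'I_k * option (option (role k))}| = #|H| * k * (k + 5).
Proof. by rewrite !card_prod !card_option card_ord card_role !addnS addn0. Qed.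
End Gadget.

Section SizeBounds.
Local Open Scope R_scope.

Lemma INR_exp2 k : INR (2 ^ k) = 2 ^ k.
Proof. by elim: k => [|k IHk] //; rewrite expnS mult_INR IHk. Qed.

Lemma le_log2 (k h : nat) : (2 ^ k <= h)%N -> INR k <= log2 (INR h).
Proof.
move=> le_2k_h; have ln2_gt0 : 0 < ln 2 by have := ln_lt_2; lra.
rewrite /log2 /Rdiv; apply: (Rmult_le_reg_r (ln 2)) => //.
rewrite Rmult_assoc Rinv_l ?Rmult_1_r -?ln_pow; try lra.
have : 2 ^ k <= INR h by rewrite -INR_exp2; apply/le_INR/leP.
case/Rle_lt_or_eq_dec => [lt_2k_h | ->]; last exact: Rle_refl.
by apply/Rlt_le/ln_increasing => //; apply: pow_lt; lra.
Qed.

(* [IZR (Z.of_nat c)] is convertible to the real literal [c]. *)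
Lemma le_size_bound (c N h k : nat) : (2 ^ k <= h)%N -> (N <= c * (h * (k * k)))%N ->
  INR N <= size_bound (IZR (Z.of_nat c)) h.
Proof.
move=> le_2k_h le_N; rewrite -INR_IZR_INZ /size_bound.
apply: Rle_trans (_ : INR (c * (h * (k * k))) <= _); first exact/le_INR/leP.
have log2_k := le_log2 le_2k_h; have := pos_INR k; have := pos_INR c; have := pos_INR h.
rewrite !mult_INR -Rmult_assoc => h_ge0 c_ge0 k_ge0.
apply: Rmult_le_compat_l; first exact: Rmult_le_pos.
exact: Rmult_le_compat.
Qed.
End SizeBounds.

Lemma leq_mul_sq (h k m c : nat) :
  (0 < k -> m <= c * k) -> h * k * m <= c * (h * (k * k)).
Proof.
case: (posnP k) => [-> | _ /(_ isT) le_m]; first by rewrite !muln0.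
by rewrite mulnCA [c * _]mulnCA mulnA leq_mul.
Qed.

Theorem lemma7p1 (H : finZmodType) :
  exists (n : nat) (e : rel (gvert H n)),
    variable_gadget e /\
    Rle (INR n) (size_bound 4 #|H|) /\
    Rle (INR #|edge_set e|) (size_bound 7 #|H|) /\
    (forall A : {set gvert H n}, is_clique e A -> #|A| <= minn 4 #|H|).
Proof.
have [k [g [gen_g g_neq0 exp_k]]] := exists_small_generating_family [group of [set: H]].
have {}exp_k : 2 ^ k <= #|H| by rewrite -cardsT.
exists #|{: gadget_aux H k}|, (relabel (gadget g)).
split; [|split; [|split]].
- apply: relabel_variable_gadget => [||f /gadget_sound]; last exact.
  + exact: (conj (@gadget_sym _ _ g) (@gadget_irr _ _ g)).
  + exact: gadget_complete.
- apply: (@le_size_bound 4 _ _ k exp_k); rewrite card_gadget_aux.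
  by apply: leq_mul_sq; lia.
- apply: (@le_size_bound 7 _ _ k exp_k).
  apply: leq_trans (card_edge_set_relabel_le (@gadget_edge_ends _ _ g)) _.
  by rewrite card_edge_index; apply: leq_mul_sq; lia.
- move=> A clA; rewrite leq_min.
  have clA2 : #|A| <= 2.
    apply: (bipartite_clique_card (colour := fun u => gadget_colour (of_gvert u))) clA.
    by move=> u v /gadget_colourP.
  rewrite (leq_trans clA2) //=.
  have [lt1H | leH1] := ltnP 1 #|H|; first exact: leq_trans clA2 _.
  have k0 : k = 0.
    by move: exp_k; case: (k) => // k'; rewrite expnS; have := expn_gt0 2 k'; lia.
  apply: leq_trans (max_card A) _.
  by rewrite /gvert card_sum card_ord card_gadget_aux k0 muln0 mul0n addn0.
Qed.
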